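(* Let $\mathbb{B}$ be a complete Boolean algebra and $\mathcal{M}=(D_0,D_1)$ a ${\tt D}\mathbb{B}$-valued model with $\mathcal{M}\models 3CA$. For $\alpha\in D_1^{(n)}$ let $I(\alpha):=\{\mathcal{X}:D_0^n\to\mathbb{B}_\Delta\mid \alpha\unlhd\mathcal{X}\}$ and $I^{(n)}:=\bigcup\{I(\alpha):\alpha\in D_1^{(n)}\}$, and let $\mathcal{N}=(D_0,I)$. Then (1) for every formula $F(X_1,\dots,X_k)$ (with individual constants from $D_0$), all $\alpha_i\in D_1^{(n_i)}$ and $\mathcal{X}_i\in I^{(n_i)}$ with $\alpha_i\unlhd\mathcal{X}_i$, we have $\mathcal{M}(F(\bar\alpha_1,\dots,\bar\alpha_k))\unlhd\mathcal{N}(F(\overline{\mathcal{X}_1},\dots,\overline{\mathcal{X}_k}))$; and (2) $\mathcal{N}\models 2CA$.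
   Context: For a cBa $\mathbb{B}$: ${\tt D}\mathbb{B}=\{(a,b):a\le b\}$, ${\tt a}=(\Box{\tt a},\Diamond{\tt a})$; ${\tt a}\unlhd{\tt b}$ iff $\Box{\tt a}\le\Box{\tt b}$ and $\Diamond{\tt a}\ge\Diamond{\tt b}$; $-{\tt a}=(-\Diamond{\tt a},-\Box{\tt a})$; $\sup_<,\inf_<$ componentwise; $\mathbb{B}_\Delta=\{(a,a):a\in\mathbb{B}\}\subseteq{\tt D}\mathbb{B}$; for functions $\alpha,\beta:D_0^n\to{\tt D}\mathbb{B}$, $\alpha\unlhd\beta$ pointwise. A ${\tt D}\mathbb{B}$-valued model $\mathcal{M}=(D_0,D_1)$: $D_0\ne\emptyset$, $D_1=\bigcup_{n\ge1}D_1^{(n)}$, $D_1^{(n)}$ a nonempty set of functions $D_0^n\to{\tt D}\mathbb{B}$; with constants for elements of $D_0$ and relation constants $\bar\alpha$, $\mathcal{M}(A)$ is defined by $\mathcal{M}(\bar\alpha(\vec t))=\alpha(\vec t)$, $\mathcal{M}(\lnot F)=-\mathcal{M}(F)$, $\lor,\land$ via $\sup_<,\inf_<$, $\exists x,\forall x$ via $\sup_<,\inf_<$ over $t\in D_0$, $\exists X^n,\forall X^n$ via $\sup_<,\inf_<$ over $\alpha\in D_1^{(n)}$, and $\mathcal{M}(\lambda\vec x.G)(\vec t)=\mathcal{M}(G(\vec t))$. $\mathcal{M}\models 3CA$: for every formula $G(x_1,\dots,x_n,X^k)$ and every $\beta\in D_1^{(k)}$ there is $\alpha\in D_1^{(n)}$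 with $\alpha\unlhd\mathcal{M}(\lambda\vec x.G(\vec x,\bar\beta))$. A $\mathbb{B}$-valued model is $\mathcal{N}=(D_0,I)$ with $I=\bigcup I^{(n)}$, $I^{(n)}$ a nonempty set of functions $D_0^n\to\mathbb{B}_\Delta$; $\mathcal{N}(A)$ is defined by the same clauses with $I^{(n)}$ in place of $D_1^{(n)}$, and its value lies in $\mathbb{B}_\Delta$, identified with $\mathbb{B}$. With $A\supset B:=\lnot A\lor B$, $A\leftrightarrow B:=(A\supset B)\land(B\supset A)$: $\mathcal{N}\models 2CA$ means that for each $n\ge1$ and each formula $G(x_1,\dots,x_n,X)$, $\mathcal{N}(\forall X\exists Y^n\forall x_1\cdots\forall x_n(Y(x_1,\dots,x_n)\leftrightarrow G(x_1,\dots,x_n,X)))=1$. *)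

(* Boolean algebras are mathcomp's ctbDistrLatticeType
   (complemented distributive lattices with top and bottom). *)
From HB Require Import structures.
From mathcomp Require Import all_boot all_order.
From Stdlib Require Import ClassicalEpsilon.
Set Implicit Arguments. Unset Strict Implicit. Unset Printing Implicit Defensive.
Import Order.Theory.
Local Open Scope order_scope.

Section Lattice.
Context {d : Order.disp_t} {B : ctbDistrLatticeType d}.

Definition is_lub (S : B -> Prop) (s : B) : Prop :=
  (forall x, S x -> x <= s) /\ (forall u, (forall x, S x -> x <= u) -> s <= u).

Definition complete_lattice : Prop := forall S : B -> Prop, exists s, is_lub S s.

(* the supremum (meaningful when B is complete) *)
Definition Bsup (S : B -> Prop) : B := epsilon (inhabits \bot) (fun s => is_lub S s).
Definition Binf (S : B -> Prop) : B := Bsup (fun u => forall x, S x -> u <= x).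

Definition supP {I : Type} (P : I -> Prop) (f : I -> B) : B :=
  Bsup (fun b => exists i, P i /\ b = f i).
Definition infP {I : Type} (P : I -> Prop) (f : I -> B) : B :=
  Binf (fun b => exists i, P i /\ b = f i).

(* elements of D B are represented as raw pairs p; p \in D B iff p.1 <= p.2 *)
Definition inDB (p : B * B) : Prop := p.1 <= p.2.
Definition inDelta (p : B * B) : Prop := p.1 = p.2.
(* a <| b  iff  Box a <= Box b  and  Diamond a >= Diamond b *)
Definition DBle (a b : B * B) : Prop := a.1 <= b.1 /\ b.2 <= a.2.
Definition DBneg (a : B * B) : B * B := (~` a.2, ~` a.1).
Definition DBjoin (a b : B * B) : B * B := (a.1 `|` b.1, a.2 `|` b.2).
Definition DBmeet (a b : B * B) : B * B := (a.1 `&` b.1, a.2 `&` b.2).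
Definition DBsupP {I : Type} (P : I -> Prop) (f : I -> B * B) : B * B :=
  (supP P (fun i => (f i).1), supP P (fun i => (f i).2)).
Definition DBinfP {I : Type} (P : I -> Prop) (f : I -> B * B) : B * B :=
  (infP P (fun i => (f i).1), infP P (fun i => (f i).2)).
End Lattice.

(* relation variables have arity n.+1 (arities are >= 1, as in the paper) *)
Inductive term (D0 : Type) : Type :=
| TVar (x : nat)
| TConst (c : D0).

Inductive form (D0 : Type) : Type :=
| Atom (n : nat) (X : nat) (ts : n.+1.-tuple (term D0))
| Not (F : form D0)
| Or (F G : form D0)
| And (F G : form D0)
| Ex1 (x : nat) (F : form D0)
| All1 (x : nat) (F : form D0)
| Ex2 (n : nat) (X : nat) (F : form D0)
| All2 (n : nat) (X : nat) (F : form D0).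

Arguments TVar {D0}.
Arguments Atom {D0}.
Arguments Ex1 {D0}. Arguments All1 {D0}. Arguments Ex2 {D0}. Arguments All2 {D0}.

Definition Imp {D0} (A C : form D0) : form D0 := Or (Not A) C.
Definition Iff {D0} (A C : form D0) : form D0 := And (Imp A C) (Imp C A).

Fixpoint free1 {D0} (F : form D0) (x : nat) : Prop :=
  match F with
  | Atom n _ ts => exists i : 'I_n.+1, tnth ts i = TVar x
  | Not F => free1 F x
  | Or F G | And F G => free1 F x \/ free1 G x
  | Ex1 y F | All1 y F => y <> x /\ free1 F x
  | Ex2 _ _ F | All2 _ _ F => free1 F x
  end.

Fixpoint free2 {D0} (F : form D0) (m Y : nat) : Prop :=
  match F with
  | Atom n X _ => n = m /\ X = Y
  | Not F => free2 F m Y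
  | Or F G | And F G => free2 F m Y \/ free2 G m Y
  | Ex1 _ F | All1 _ F => free2 F m Y
  | Ex2 n X F | All2 n X F => (n, X) <> (m, Y) /\ free2 F m Y
  end.

Section Semantics.
Context {d : Order.disp_t} {B : ctbDistrLatticeType d} {D0 : Type}.

Definition relB (n : nat) : Type := n.+1.-tuple D0 -> B * B.

Definition upd (e : nat -> D0) (x : nat) (t : D0) : nat -> D0 :=
  fun y => if y == x then t else e y.

Definition updl (e : nat -> D0) (xs : seq nat) (ts : seq D0) : nat -> D0 :=
  foldr (fun p e' => upd e' p.1 p.2) e (zip xs ts).

Definition upd2 (e : forall n, nat -> relB n) (n X : nat) (a : relB n) :
  forall m, nat -> relB m :=
  fun m Y => match PeanoNat.Nat.eq_dec n m with
             | left H => if Y == X then eq_rect n relB a m H else e m Y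
             | right _ => e m Y
             end.
Arguments upd2 e n X a : clear implicits.

Definition teval (e1 : nat -> D0) (t : term D0) : D0 :=
  match t with TVar x => e1 x | TConst c => c end.

(* Dom n = the admissible relations of arity n+1 (D_1^(n+1), resp. I^(n+1)) *)
Fixpoint eval (Dom : forall n, relB n -> Prop) (e1 : nat -> D0)
  (e2 : forall n, nat -> relB n) (F : form D0) : B * B :=
  match F with
  | Atom n X ts => e2 n X (map_tuple (teval e1) ts)
  | Not F => DBneg (eval Dom e1 e2 F)
  | Or F G => DBjoin (eval Dom e1 e2 F) (eval Dom e1 e2 G)
  | And F G => DBmeet (eval Dom e1 e2 F) (eval Dom e1 e2 G)
  | Ex1 x F => DBsupP (fun _ : D0 => True) (fun t => eval Dom (upd e1 x t) e2 F)
  | All1 x F => DBinfP (fun _ : D0 => True) (fun t => eval Dom (upd e1 x t) e2 F)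
  | Ex2 n X F => DBsupP (Dom n) (fun a => eval Dom e1 (upd2 e2 n X a) F)
  | All2 n X F => DBinfP (Dom n) (fun a => eval Dom e1 (upd2 e2 n X a) F)
  end.

Definition rle {n} (a b : relB n) : Prop := forall t, DBle (a t) (b t).

Definition CA3 (D1 : forall n, relB n -> Prop) : Prop :=
  forall (n k : nat) (xs : n.+1.-tuple nat) (X : nat) (G : form D0),
    uniq xs ->
    (forall x, free1 G x -> x \in xs) ->
    (forall m Y, free2 G m Y -> m = k /\ Y = X) ->
    forall beta : relB k, D1 k beta ->
    forall (e1 : nat -> D0) (e2 : forall n, nat -> relB n),
    exists alpha : relB n, D1 n alpha /\
      forall t : n.+1.-tuple D0,
        DBle (alpha t) (eval D1 (updl e1 xs t) (upd2 e2 k X beta) G).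

Definition Irel (D1 : forall n, relB n -> Prop) (n : nat) (Xr : relB n) : Prop :=
  (forall t, inDelta (Xr t)) /\ exists alpha, D1 n alpha /\ rle alpha Xr.


Definition CA2 (Dom : forall n, relB n -> Prop) : Prop :=
  forall (n k : nat) (xs : n.+1.-tuple nat) (X Y : nat) (G : form D0),
    uniq xs ->
    (forall x, free1 G x -> x \in xs) ->
    (forall m Z, free2 G m Z -> m = k /\ Z = X) ->
    (n, Y) <> (k, X) ->
    forall (e1 : nat -> D0) (e2 : forall n, nat -> relB n),
      eval Dom e1 e2
        (All2 k X (Ex2 n Y (foldr All1 (Iff (Atom n Y (map_tuple TVar xs)) G) xs)))
      = (\top, \top).
End Semantics.
Arguments Irel {d B D0} D1 n Xr.

(* Part (1) is an induction on F in which only the second-order quantifiers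
   need an idea: each alpha in D_1 lies below (Box alpha, Box alpha), which is
   in I, and each X in I lies above some alpha in D_1 by the definition of I,
   so the sups and infs over D_1 and over I compare termwise.
   For part (2), given beta in I above beta' in D_1, let Y be the N-value of
   the comprehension formula G(x, beta). It is two-valued, and it lies in I:
   3CA gives alpha in D_1 below the M-value of G(x, beta'), which by part (1)
   lies below Y. For this Y the biconditional evaluates to the top element. *)

From mathcomp Require Import all_boot all_order.
From Stdlib Require Import ClassicalEpsilon FunctionalExtensionality Eqdep_dec.
Set Implicit Arguments. Unset Strict Implicit. Unset Printing Implicit Defensive.
Import Order.Theory.
Local Open Scope order_scope.

Arguments upd2 {d B D0} e n X a m Y _.

Section CompleteLattice.
Context {d : Order.disp_t} {B : ctbDistrLatticeType d}.
Hypothesis complB : @complete_lattice d B.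

Lemma is_lub_Bsup (S : B -> Prop) : is_lub S (Bsup S).
Proof.
have [s Hs] := complB S.
exact: (epsilon_spec (inhabits \bot) (fun s => is_lub S s) (ex_intro _ s Hs)).
Qed.

Section Indexed.
Context {I : Type} (P : I -> Prop) (f : I -> B).

Lemma supP_ub i : P i -> f i <= supP P f.
Proof. by move=> Pi; apply: (proj1 (is_lub_Bsup _)); exists i. Qed.

Lemma supP_lub u : (forall i, P i -> f i <= u) -> supP P f <= u.
Proof. by move=> fu; apply: (proj2 (is_lub_Bsup _)) => _ [i [Pi ->]]; apply: fu. Qed.

(* [Binf] is the sup of the lower bounds, so the roles of [is_lub_Bsup] swap. *)
Lemma infP_lb i : P i -> infP P f <= f i.
Proof. by move=> Pi; apply: (proj2 (is_lub_Bsup _)) => u; apply; exists i. Qed.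

Lemma infP_glb u : (forall i, P i -> u <= f i) -> u <= infP P f.
Proof. by move=> uf; apply: (proj1 (is_lub_Bsup _)) => _ [i [Pi ->]]; apply: uf. Qed.

Lemma supP_eq_top i : P i -> f i = \top -> supP P f = \top.
Proof. by move=> Pi fi; apply/le_anti; rewrite lex1 -fi supP_ub. Qed.

Lemma infP_eq_top : (forall i, P i -> f i = \top) -> infP P f = \top.
Proof. by move=> ftop; apply/le_anti; rewrite lex1 infP_glb // => i Pi; rewrite ftop. Qed.

End Indexed.

Lemma eq_supP {I : Type} (P : I -> Prop) (f g : I -> B) :
  (forall i, P i -> f i = g i) -> supP P f = supP P g.
Proof.
move=> fg; apply/le_anti/andP; split; apply: supP_lub => i Pi.
  by rewrite fg // supP_ub.
by rewrite -fg // supP_ub.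
Qed.

Lemma eq_infP {I : Type} (P : I -> Prop) (f g : I -> B) :
  (forall i, P i -> f i = g i) -> infP P f = infP P g.
Proof.
move=> fg; apply/le_anti/andP; split; apply: infP_glb => i Pi.
  by rewrite -fg // infP_lb.
by rewrite fg // infP_lb.
Qed.

Lemma DBle_supP {I J : Type} (P : I -> Prop) (Q : J -> Prop)
    (f : I -> B * B) (g : J -> B * B) :
  (forall i, P i -> exists2 j, Q j & (f i).1 <= (g j).1) ->
  (forall j, Q j -> exists2 i, P i & (g j).2 <= (f i).2) ->
  DBle (DBsupP P f) (DBsupP Q g).
Proof.
move=> fg gf; split; rewrite /DBsupP /=; apply: supP_lub.
  by move=> i /fg[j Qj le_fg]; apply: le_trans le_fg _; exact: supP_ub _ Qj.
by move=> j /gf[i Pi le_gf]; apply: le_trans le_gf _; exact: supP_ub _ Pi.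
Qed.

Lemma DBle_infP {I J : Type} (P : I -> Prop) (Q : J -> Prop)
    (f : I -> B * B) (g : J -> B * B) :
  (forall j, Q j -> exists2 i, P i & (f i).1 <= (g j).1) ->
  (forall i, P i -> exists2 j, Q j & (g j).2 <= (f i).2) ->
  DBle (DBinfP P f) (DBinfP Q g).
Proof.
move=> fg gf; split; rewrite /DBinfP /=; apply: infP_glb.
  by move=> j /fg[i Pi le_fg]; apply: le_trans _ le_fg; exact: infP_lb _ Pi.
by move=> i /gf[j Qj le_gf]; apply: le_trans _ le_gf; exact: infP_lb _ Qj.
Qed.

Lemma DBsupP_eq_top {I : Type} (P : I -> Prop) (f : I -> B * B) i :
  P i -> f i = (\top, \top) -> DBsupP P f = (\top, \top).
Proof. by move=> Pi fi; rewrite /DBsupP !(supP_eq_top Pi) ?fi. Qed.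

Lemma DBinfP_eq_top {I : Type} (P : I -> Prop) (f : I -> B * B) :
  (forall i, P i -> f i = (\top, \top)) -> DBinfP P f = (\top, \top).
Proof. by move=> ftop; rewrite /DBinfP !infP_eq_top // => i /ftop ->. Qed.

End CompleteLattice.

Section DoubleValues.
Context {d : Order.disp_t} {B : ctbDistrLatticeType d}.

Lemma DBle_trans (a b c : B * B) : DBle a b -> DBle b c -> DBle a c.
Proof.
by move=> [ab1 ab2] [bc1 bc2]; split; [apply: le_trans ab1 bc1 | apply: le_trans bc2 ab2].
Qed.

Lemma DBiff_delta (p : B * B) :
  inDelta p -> DBmeet (DBjoin (DBneg p) p) (DBjoin (DBneg p) p) = (\top, \top).
Proof.
by case: p => a b; rewrite /inDelta /= => <-; rewrite /DBmeet /= joinCx meetxx.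
Qed.

End DoubleValues.

Section Semantics.
Context {d : Order.disp_t} {B : ctbDistrLatticeType d} {D0 : Type}.
Notation Rel n := (@relB d B D0 n).
Notation env2 := (forall n, nat -> Rel n).

Lemma upd2_same (e : env2) n X a : upd2 e n X a n X = a.
Proof.
rewrite /upd2; case: PeanoNat.Nat.eq_dec => [E|]; last by [].
by rewrite eqxx (UIP_refl_nat _ E).
Qed.

Lemma upd2_other (e : env2) n X a m Y :
  (n, X) <> (m, Y) -> upd2 e n X a m Y = e m Y.
Proof.
move=> neq; rewrite /upd2; case: PeanoNat.Nat.eq_dec => [enm|//].
by subst m; case: eqP => // eYX; case: neq; rewrite eYX.
Qed.

(* [free2 (Ex2 n X F)] unfolds to the same condition as [free2 (All2 n X F)]. *)
Lemma upd2_free2 (R : forall m, relB m -> relB m -> Prop) (e e' : env2)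
    n X (F : form D0) a a' :
  R n a a' -> (forall m Y, free2 (Ex2 n X F) m Y -> R m (e m Y) (e' m Y)) ->
  forall m Y, free2 F m Y -> R m (upd2 e n X a m Y) (upd2 e' n X a' m Y).
Proof.
move=> Raa' Ree' m Y FY.
case: (eqVneq (n, X) (m, Y)) => [[<- <-]|/eqP neq]; first by rewrite !upd2_same.
by rewrite !upd2_other //; apply: Ree'.
Qed.

Arguments upd2_free2 R {e e' n X F a a'}.

Lemma eq_eval (Dom : forall n, relB n -> Prop) (F : form D0) :
  forall (e1 e1' : nat -> D0) (e2 e2' : env2),
  (forall x, free1 F x -> e1 x = e1' x) ->
  (forall m Y, free2 F m Y -> e2 m Y = e2' m Y) ->
  eval Dom e1 e2 F = eval Dom e1' e2' F.
Proof.
have upd_free1 (e1 e1' : nat -> D0) x (G : form D0) t :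
    (forall y, free1 (Ex1 x G) y -> e1 y = e1' y) ->
    forall y, free1 G y -> upd e1 x t y = upd e1' x t y.
  move=> ee' y Gy; rewrite /upd; case: eqP => // nyx.
  by apply: ee'; split=> // exy; apply: nyx.
elim: F => [n X ts|F IH|F IHF G IHG|F IHF G IHG|x F IH|x F IH|n X F IH|n X F IH]
  e1 e1' e2 e2' ee1 ee2 /=.
- rewrite ee2; last by [].
  congr (e2' n X _); apply: eq_from_tnth => i; rewrite !tnth_map.
  by case Ei: (tnth ts i) => [y|c] //=; apply: ee1; exists i.
- by rewrite (IH e1 e1' e2 e2').
- by congr DBjoin; [apply: IHF | apply: IHG] => *;
    (apply: ee1 || apply: ee2); by [left | right].
- by congr DBmeet; [apply: IHF | apply: IHG] => *;
    (apply: ee1 || apply: ee2); by [left | right].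
- congr DBsupP; apply: functional_extensionality => t.
  exact: IH (upd_free1 _ _ _ _ _ ee1) ee2.
- congr DBinfP; apply: functional_extensionality => t.
  exact: IH (upd_free1 _ _ _ _ _ ee1) ee2.
- congr DBsupP; apply: functional_extensionality => a.
  exact: IH ee1 (upd2_free2 (fun _ => eq) erefl ee2).
- congr DBinfP; apply: functional_extensionality => a.
  exact: IH ee1 (upd2_free2 (fun _ => eq) erefl ee2).
Qed.

Lemma updl_map (e f : nat -> D0) (xs : seq nat) x :
  x \in xs -> updl e xs (map f xs) x = f x.
Proof.
elim: xs => //= y xs IH; rewrite in_cons {1}/updl /= {1}/upd.
by case: (eqVneq x y) => [->|_] //= /IH.
Qed.

Section DeltaValued.
Variable Dom : forall n, Rel n -> Prop.
Arguments Dom : clear implicits.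
Hypothesis complB : @complete_lattice d B.
Hypothesis Dom_Delta : forall n (Xr : Rel n), Dom n Xr -> forall t, inDelta (Xr t).

Lemma eval_inDelta (F : form D0) :
  forall e1 (e2 : env2),
  (forall m Y, free2 F m Y -> forall t, inDelta (e2 m Y t)) ->
  inDelta (eval Dom e1 e2 F).
Proof.
rewrite /inDelta.
elim: F => [n X ts|F IH|F IHF G IHG|F IHF G IHG|x F IH|x F IH|n X F IH|n X F IH]
  e1 e2 e2_Delta /=.
- exact: e2_Delta.
- by rewrite (IH e1 e2).
- by rewrite (IHF e1 e2) ?(IHG e1 e2) // => *; apply: e2_Delta; [right | left].
- by rewrite (IHF e1 e2) ?(IHG e1 e2) // => *; apply: e2_Delta; [right | left].
- by apply: eq_supP => // t _; rewrite (IH _ e2).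
- by apply: eq_infP => // t _; rewrite (IH _ e2).
- apply: eq_supP => // a /Dom_Delta a_Delta; apply: IH.
  exact: (upd2_free2 (fun m _ b => forall t, (b t).1 = (b t).2) a_Delta e2_Delta).
- apply: eq_infP => // a /Dom_Delta a_Delta; apply: IH.
  exact: (upd2_free2 (fun m _ b => forall t, (b t).1 = (b t).2) a_Delta e2_Delta).
Qed.

(* The defined relation makes both sides of the biconditional the same
   two-valued element p, and p <-> p is \top. *)
Lemma eval_Iff_comprehension n (xs : n.+1.-tuple nat) Y (G : form D0)
    e1 e1' (e2 : env2) :
  (forall x, free1 G x -> x \in xs) ->
  (forall m Z, free2 G m Z -> (n, Y) <> (m, Z)) ->
  (forall m Z, free2 G m Z -> forall t, inDelta (e2 m Z t)) ->
  eval Dom e1' (upd2 e2 n Y (fun t => eval Dom (updl e1 xs t) e2 G))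
    (Iff (Atom n Y (map_tuple TVar xs)) G) = (\top, \top).
Proof.
move=> G1 G2 e2_Delta.
set e2Y := upd2 e2 n Y _.
have e2Y_G m Z : free2 G m Z -> e2 m Z = e2Y m Z.
  by move=> GZ; rewrite /e2Y upd2_other //; apply: G2.
have atom_G : e2Y n Y (map_tuple (teval e1') (map_tuple TVar xs)) = eval Dom e1' e2Y G.
  rewrite /e2Y upd2_same; apply: eq_eval => // x Gx /=.
  by rewrite -map_comp; apply: updl_map; apply: G1.
have G_Delta : inDelta (eval Dom e1' e2Y G).
  by apply: eval_inDelta => m Z GZ; rewrite -e2Y_G //; apply: e2_Delta.
by rewrite /Iff /Imp /= atom_G DBiff_delta.
Qed.

Lemma eval_foldr_All1_top (e2 : env2) (F : form D0) (xs : seq nat) :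
  (forall e1, eval Dom e1 e2 F = (\top, \top)) ->
  forall e1, eval Dom e1 e2 (foldr All1 F xs) = (\top, \top).
Proof.
by move=> Ftop; elim: xs => //= x xs IH e1; apply: DBinfP_eq_top => // t _.
Qed.

End DeltaValued.

Section Henkin.
Variable D1 : forall n, Rel n -> Prop.
Arguments D1 : clear implicits.
Hypothesis complB : @complete_lattice d B.
Hypothesis D1_DB : forall n (a : Rel n), D1 n a -> forall t, inDB (a t).

Definition box_rel n (a : Rel n) : Rel n := fun t => ((a t).1, (a t).1).

Definition approx n (a Xr : Rel n) : Prop := Irel D1 n Xr /\ rle a Xr.

Lemma approx_box_rel n (a : Rel n) : D1 n a -> approx a (box_rel a).
Proof.
move=> D1a; have a_box : rle a (box_rel a) by move=> t; split=> //=; apply: D1_DB.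
by split=> //; split=> //; exists a.
Qed.

Lemma Irel_approx n (Xr : Rel n) : Irel D1 n Xr -> exists2 a, D1 n a & approx a Xr.
Proof. by move=> IXr; case: (IXr) => _ [a [D1a aXr]]; exists a. Qed.

Lemma eval_DBle_Irel (F : form D0) :
  forall (eM eN : env2) e1,
  (forall n X, free2 F n X -> approx (eM n X) (eN n X)) ->
  DBle (eval D1 e1 eM F) (eval (Irel D1) e1 eN F).
Proof.
elim: F => [n X ts|F IH|F IHF G IHG|F IHF G IHG|x F IH|x F IH|n X F IH|n X F IH]
  eM eN e1 approxF /=.
- by have [_] := approxF n X (conj erefl erefl).
- by have [le1 le2] := IH eM eN e1 approxF; split; rewrite /= leC.
- have [le1 le2] := IHF eM eN e1 (fun n X FX => approxF n X (or_introl FX)).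
  have [le3 le4] := IHG eM eN e1 (fun n X GX => approxF n X (or_intror GX)).
  by split; apply: leU2.
- have [le1 le2] := IHF eM eN e1 (fun n X FX => approxF n X (or_introl FX)).
  have [le3 le4] := IHG eM eN e1 (fun n X GX => approxF n X (or_intror GX)).
  by split; apply: leI2.
- by apply: (DBle_supP complB) => // t _; exists t => //;
    case: (IH eM eN (upd e1 x t) approxF).
- by apply: (DBle_infP complB) => // t _; exists t => //;
    case: (IH eM eN (upd e1 x t) approxF).
- have IHa a Xr : approx a Xr -> DBle (eval D1 e1 (upd2 eM n X a) F)
      (eval (Irel D1) e1 (upd2 eN n X Xr) F).
    by move=> aXr; apply: IH; apply: (upd2_free2 approx).
  apply: (DBle_supP complB) => [a /approx_box_rel aXr|Xr /Irel_approx[a D1a aXr]].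
    by exists (box_rel a); [case: aXr | case: (IHa _ _ aXr)].
  by exists a => //; case: (IHa _ _ aXr).
- have IHa a Xr : approx a Xr -> DBle (eval D1 e1 (upd2 eM n X a) F)
      (eval (Irel D1) e1 (upd2 eN n X Xr) F).
    by move=> aXr; apply: IH; apply: (upd2_free2 approx).
  apply: (DBle_infP complB) => [Xr /Irel_approx[a D1a aXr]|a /approx_box_rel aXr].
    by exists a => //; case: (IHa _ _ aXr).
  by exists (box_rel a); [case: aXr | case: (IHa _ _ aXr)].
Qed.

Lemma Irel_inDelta n (Xr : Rel n) : Irel D1 n Xr -> forall t, inDelta (Xr t).
Proof. by case. Qed.

Lemma Irel_comprehension n k (xs : n.+1.-tuple nat) X (G : form D0)
    e1 (e2 : env2) beta :
  CA3 D1 -> uniq xs ->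
  (forall x, free1 G x -> x \in xs) ->
  (forall m Y, free2 G m Y -> m = k /\ Y = X) ->
  Irel D1 k beta ->
  Irel D1 n (fun t => eval (Irel D1) (updl e1 xs t) (upd2 e2 k X beta) G).
Proof.
move=> ca3 uniq_xs G1 G2 Ibeta; split.
  move=> t; apply: (eval_inDelta complB Irel_inDelta) => m Y /G2[-> ->].
  by rewrite upd2_same; apply: Irel_inDelta.
have [beta' D1beta' beta'_beta] := Irel_approx Ibeta.
have [alpha [D1alpha alpha_G]] := ca3 n k xs X G uniq_xs G1 G2 beta' D1beta' e1 e2.
exists alpha; split=> // t; apply: DBle_trans (alpha_G t) _.
by apply: eval_DBle_Irel => m Y /G2[-> ->]; rewrite !upd2_same.
Qed.

End Henkin.
End Semantics.

Theorem mainTheorem6 (d : Order.disp_t) (B : ctbDistrLatticeType d) (D0 : Type)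
  (D1 : forall n : nat, @relB d B D0 n -> Prop) :
  @complete_lattice d B ->
  inhabited D0 ->
  (forall n, exists a, D1 n a) ->
  (forall n (a : relB n), D1 n a -> forall t, inDB (a t)) ->
  CA3 D1 ->
  (forall (F : form D0) (eM eN : forall n, nat -> relB n) (e1 : nat -> D0),
      (forall x, ~ free1 F x) ->
      (forall n X, free2 F n X ->
         D1 n (eM n X) /\ Irel D1 n (eN n X) /\ rle (eM n X) (eN n X)) ->
      DBle (eval D1 e1 eM F) (eval (Irel D1) e1 eN F))
  /\ CA2 (Irel D1).
Proof.
move=> complB _ _ D1_DB ca3; split.
  move=> F eM eN e1 _ approxF.
  by apply: (eval_DBle_Irel complB D1_DB) => n X /approxF[].
move=> n k xs X Y G uniq_xs G1 G2 nY_kX e1 e2 /=.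
apply: (DBinfP_eq_top complB) => beta Ibeta.
have IYrel := Irel_comprehension complB D1_DB e1 e2 ca3 uniq_xs G1 G2 Ibeta.
apply: (DBsupP_eq_top complB IYrel); apply: (eval_foldr_All1_top complB) => e1'.
apply: (eval_Iff_comprehension complB (@Irel_inDelta _ _ _ D1)) => // [m Z|m Z].
  by case/G2=> -> ->.
by move=> /G2[-> ->]; rewrite upd2_same; apply: Irel_inDelta Ibeta.
Qed.
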